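(* Assume the setting and algorithm described in the context. If $0<\alpha\le\frac{\sqrt n}{\sqrt{8m}\,L}$, then for all $k\ge0$, almost surely, $$\mathbb E\big[t^{k+1}\,|\,\mathcal F^k\big]\le\Big(1-\frac1{4m}\Big)t^k+16m\alpha^2L\big(F(\bar x^k)-F^*\big)+\Big(8m\alpha^2L^2+\frac9{4m}\Big)\frac1n\|x^k-Jx^k\|^2 .$$
   Context: Setting. Let $n,m,p\ge1$ be integers and $\mathcal V=\{1,\dots,n\}$. For each $i\in\mathcal V$ and $j\in\{1,\dots,m\}$, $f_{i,j}:\mathbb R^p\to\mathbb R$ is differentiable and $L$-smooth for some $L>0$, i.e. $\|\nabla f_{i,j}(x)-\nabla f_{i,j}(y)\|\le L\|x-y\|$ for all $x,y\in\mathbb R^p$. Let $f_i:=\frac1m\sum_{j=1}^m f_{i,j}$ and $F:=\frac1n\sum_{i=1}^n f_i$, and assume $F^*:=\inf_{x\in\mathbb R^p}F(x)>-\infty$. Let $\underline W=(\underline w_{ir})\in\mathbb R^{n\times n}$ be a nonnegative, primitive, doubly stochastic matrix ($\underline W\mathbf 1_n=\mathbf 1_n$, $\mathbf 1_n^\top\underline W=\mathbf 1_n^\top$), and let $\lambda\in[0,1)$ be its second largest singular value. Any expression with $\lambda$ in a denominator is read as $+\infty$ when $\lambda=0$. Algorithm GT-SAGA with step-size $\alpha>0$: fix a deterministic $\bar x^0\in\mathbb R^p$; for all $i\in\mathcal V$ set $x_i^0=\bar x^0$, $z_{i,j}^0=x_i^0$ for all $j$, $y_i^0=0$, $g_i^{-1}=0$.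 For $k=0,1,2,\dots$ and every $i\in\mathcal V$: draw $\tau_i^k$ uniformly from $\{1,\dots,m\}$; set $g_i^k=\nabla f_{i,\tau_i^k}(x_i^k)-\nabla f_{i,\tau_i^k}(z_{i,\tau_i^k}^k)+\frac1m\sum_{j=1}^m\nabla f_{i,j}(z_{i,j}^k)$; set $y_i^{k+1}=\sum_{r=1}^n\underline w_{ir}(y_r^k+g_r^k-g_r^{k-1})$; set $x_i^{k+1}=\sum_{r=1}^n\underline w_{ir}(x_r^k-\alpha y_r^{k+1})$; draw $s_i^k$ uniformly from $\{1,\dots,m\}$; set $z_{i,j}^{k+1}=x_i^k$ if $j=s_i^k$ and $z_{i,j}^{k+1}=z_{i,j}^k$ otherwise. The family $\{\tau_i^k,s_i^k: i\in\mathcal V,k\ge0\}$ is independent. Notation. $x^k,y^k,g^k\in\mathbb R^{np}$ stack the $x_i^k$, $y_i^k$, $g_i^k$; $\nabla\mathbf f(x^k)\in\mathbb R^{np}$ stacks $\nabla f_i(x_i^k)$, $i=1,\dots,n$; $W=\underline W\otimes I_p$, $J=(\frac1n\mathbf 1_n\mathbf 1_n^\top)\otimes I_p$; $\bar x^k=\frac1n\sum_i x_i^k$, $\bar g^k=\frac1n\sum_i g_i^k$, $\overline{\nabla\mathbf f}(x^k)=\frac1n\sum_i\nabla f_i(x_i^k)$. $\mathcal F^0$ is the trivial $\sigma$-algebra and $\mathcal F^k=\sigma(\{\tau_i^t,s_i^t:i\in\mathcal V,\ t\le k-1\})$ for $k\ge1$. $t^k:=\frac1n\sum_{i=1}^n\frac1m\sum_{j=1}^m\|\bar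 x^k-z_{i,j}^k\|^2$. $\|\nabla\mathbf f(x^0)\|^2:=\sum_{i=1}^n\|\nabla f_i(\bar x^0)\|^2$. Norms are Euclidean (spectral for matrices); vector and matrix inequalities are entrywise. *)

From HB Require Import structures.
From mathcomp Require Import all_boot all_order all_algebra.
From mathcomp Require Import all_classical all_reals all_analysis.
Set Implicit Arguments. Unset Strict Implicit. Unset Printing Implicit Defensive.
Import Order.TTheory GRing.Theory Num.Theory.
Import numFieldNormedType.Exports.
Local Open Scope ring_scope.
Local Open Scope classical_set_scope.

Section GTSAGA.
Variables (R : realType) (n m p : nat).

Definition sqnorm (v : 'rV[R]_p) : R := \sum_(l < p) (v 0 l) ^+ 2.
Definition enorm (v : 'rV[R]_p) : R := Num.sqrt (sqnorm v).
Definition dotv (u v : 'rV[R]_p) : R := \sum_(l < p) u 0 l * v 0 l.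

Definition mxpow (W : 'M[R]_n) (k : nat) : 'M[R]_n := iter k (mulmx W) 1%:M.

Definition nonneg_mx (W : 'M[R]_n) := forall i j, 0 <= W i j.
Definition doubly_stochastic (W : 'M[R]_n) :=
  (forall i, \sum_(j < n) W i j = 1) /\ (forall j, \sum_(i < n) W i j = 1).
Definition primitive_mx (W : 'M[R]_n) :=
  exists k, (0 < k)%N /\ forall i j, 0 < mxpow W k i j.

Definition Fobj (f : 'I_n -> 'I_m -> 'rV[R]_p -> R) (x : 'rV[R]_p) : R :=
  n%:R^-1 * \sum_(i < n) (m%:R^-1 * \sum_(j < m) f i j x).

(* state of GT-SAGA at iteration k: x_i^k, y_i^k, g_i^{k-1}, z_{i,j}^k *)
Record state := State {
  sx : 'I_n -> 'rV[R]_p;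
  sy : 'I_n -> 'rV[R]_p;
  sg : 'I_n -> 'rV[R]_p;
  sz : 'I_n -> 'I_m -> 'rV[R]_p }.

(* the random draws at one iteration: (tau_i^k)_i and (s_i^k)_i *)
Definition draw := ({ffun 'I_n -> 'I_m} * {ffun 'I_n -> 'I_m})%type.

Definition init_state (x0 : 'rV[R]_p) : state :=
  State (fun _ => x0) (fun _ => 0) (fun _ => 0) (fun _ _ => x0).

Definition step (gf : 'I_n -> 'I_m -> 'rV[R]_p -> 'rV[R]_p) (W : 'M[R]_n)
  (alpha : R) (st : state) (d : draw) : state :=
  let tau := d.1 in let s := d.2 in
  let g i := gf i (tau i) (sx st i) - gf i (tau i) (sz st i (tau i))
             + m%:R^-1 *: \sum_(j < m) gf i j (sz st i j) in
  let y' i := \sum_(r < n) W i r *: (sy st r + g r - sg st r) in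
  let x' i := \sum_(r < n) W i r *: (sx st r - alpha *: y' r) in
  let z' i j := if j == s i then sx st i else sz st i j in
  State x' y' g z'.

Fixpoint gt_saga gf W alpha x0 (omega : nat -> draw) (k : nat) : state :=
  match k with
  | 0 => init_state x0
  | k'.+1 => step gf W alpha (gt_saga gf W alpha x0 omega k') (omega k')
  end.

Definition xbar (st : state) : 'rV[R]_p := n%:R^-1 *: \sum_(i < n) sx st i.

Definition tk (st : state) : R :=
  n%:R^-1 * \sum_(i < n) (m%:R^-1 * \sum_(j < m) sqnorm (xbar st - sz st i j)).

Definition consensus_err (st : state) : R :=
  \sum_(i < n) sqnorm (sx st i - xbar st).

(* Conditional expectation given F^k of a random variable Y that depends on the
   draws omega 0, ..., omega k only: since the draws are independent and
   uniform (the draw at time k is uniform on the finite set [draw]), it is the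
   average over the draw at time k, the history omega 0..k-1 being fixed. *)
Definition cond_exp_next (k : nat) (Y : (nat -> draw) -> R) (omega : nat -> draw) : R :=
  (#|{: draw}|%:R)^-1 *
  \sum_(d : draw) Y (fun t => if t == k then d else omega t).

End GTSAGA.

From HB Require Import structures.
From mathcomp Require Import all_boot all_order all_algebra.
From mathcomp Require Import all_classical all_reals all_analysis.
From mathcomp Require Import ring lra.
Set Implicit Arguments. Unset Strict Implicit. Unset Printing Implicit Defensive.
Import Order.TTheory GRing.Theory Num.Theory.
Import numFieldNormedType.Exports.
Local Open Scope ring_scope.

(* Lemma 19 of the GT-SAGA analysis: a one-step bound on the conditional
   expectation of the SAGA table error
     t^k = 1/n sum_i 1/m sum_j |xbar^k - z_ij^k|^2.
   Conditioning on F^k amounts to averaging over the two independent uniform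
   draws tau^k (sampled gradients) and s^k (refreshed table entries).
   1. W is column stochastic, so gradient tracking keeps sum_i y_i = sum_i g_i
      and the network average moves by xbar^{k+1} = xbar^k - alpha gbar(tau),
      gbar being the average of the n SAGA estimators.
   2. Averaging over s: every table entry is refreshed to x_i^k with
      probability 1/m, which gives an exact formula for E_s t^{k+1}.
   3. Averaging over tau: a bias-variance decomposition of gbar around its
      mean mu = 1/n sum_i grad f_i(x_i^k), with variance V.
   4. Young's inequality, |mu|^2 <= 2 L^2 C + 8 L (F(xbar) - inf F) (Lipschitz
      gradients and the descent lemma), V <= L^2/n (2 C + 2 t^k) (the n
      estimators are independent and centred), where C = |x - Jx|^2 / n, and
      the step-size condition close the estimate by elementary arithmetic. *)

Section InnerProduct.
Variables (R : realType) (p : nat).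
Implicit Types (u v w : 'rV[R]_p) (a c : R).

Lemma sqnormE v : sqnorm v = dotv v v.
Proof. by rewrite /sqnorm /dotv; apply: eq_bigr => l _; rewrite expr2. Qed.
Lemma dotvC u v : dotv u v = dotv v u.
Proof. by apply: eq_bigr => l _; rewrite mulrC. Qed.
Lemma dotvDl u v w : dotv (u + v) w = dotv u w + dotv v w.
Proof. by rewrite /dotv -big_split; apply: eq_bigr => l _; rewrite mxE mulrDl. Qed.
Lemma dotvDr u v w : dotv w (u + v) = dotv w u + dotv w v.
Proof. by rewrite dotvC dotvDl !(dotvC w). Qed.
Lemma dotvZl a u v : dotv (a *: u) v = a * dotv u v.
Proof. by rewrite /dotv mulr_sumr; apply: eq_bigr => l _; rewrite mxE mulrA. Qed.
Lemma dotvZr a u v : dotv v (a *: u) = a * dotv v u.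
Proof. by rewrite dotvC dotvZl dotvC. Qed.
Lemma dotvNl u v : dotv (- u) v = - dotv u v.
Proof. by rewrite -scaleN1r dotvZl mulN1r. Qed.
Lemma dotvNr u v : dotv v (- u) = - dotv v u.
Proof. by rewrite dotvC dotvNl dotvC. Qed.
Lemma dotvBl u v w : dotv (u - v) w = dotv u w - dotv v w.
Proof. by rewrite dotvDl dotvNl. Qed.
Lemma dotv0l v : dotv 0 v = 0.
Proof. by rewrite /dotv big1 // => l _; rewrite mxE mul0r. Qed.
Lemma dotv_suml (T : finType) (P : pred T) (F : T -> 'rV[R]_p) v :
  dotv (\sum_(t | P t) F t) v = \sum_(t | P t) dotv (F t) v.
Proof.
by apply: (big_morph (fun x => dotv x v)) => [a b|]; [exact: dotvDl | exact: dotv0l].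
Qed.
Lemma dotv_sumr (T : finType) (P : pred T) (F : T -> 'rV[R]_p) v :
  dotv v (\sum_(t | P t) F t) = \sum_(t | P t) dotv v (F t).
Proof. by rewrite dotvC dotv_suml; apply: eq_bigr => t _; rewrite dotvC. Qed.

Lemma sqnorm_ge0 v : 0 <= sqnorm v.
Proof. by apply: sumr_ge0 => l _; rewrite sqr_ge0. Qed.
Lemma sqnormD u v : sqnorm (u + v) = sqnorm u + 2 * dotv u v + sqnorm v.
Proof. rewrite !sqnormE dotvDl !dotvDr (dotvC v u); ring. Qed.
Lemma sqnormB u v : sqnorm (u - v) = sqnorm u - 2 * dotv u v + sqnorm v.
Proof. rewrite !sqnormE dotvDl !dotvDr !dotvNl !dotvNr (dotvC v u); ring. Qed.
Lemma sqnormZ a v : sqnorm (a *: v) = a ^+ 2 * sqnorm v.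
Proof. rewrite !sqnormE dotvZl dotvZr; ring. Qed.
Lemma sqnormN v : sqnorm (- v) = sqnorm v.
Proof. by rewrite -scaleN1r sqnormZ sqrrN expr1n mul1r. Qed.
Lemma sqnormBC u v : sqnorm (u - v) = sqnorm (v - u).
Proof. by rewrite -sqnormN opprB. Qed.

(* Young's inequality 2 <u, v> <= |u|^2 / c + c |v|^2, from |u - c v|^2 >= 0 *)
Lemma young u v c : 0 < c -> 2 * dotv u v <= c^-1 * sqnorm u + c * sqnorm v.
Proof.
move=> c0; have := sqnorm_ge0 (u - c *: v).
rewrite sqnormB sqnormZ dotvZr => h.
have h2 : 0 <= c^-1 * (sqnorm u - 2 * (c * dotv u v) + c ^+ 2 * sqnorm v).
  by rewrite mulr_ge0 // invr_ge0 ltW.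
rewrite -subr_ge0.
have -> : c^-1 * sqnorm u + c * sqnorm v - 2 * dotv u v =
   c^-1 * (sqnorm u - 2 * (c * dotv u v) + c ^+ 2 * sqnorm v).
  by field; rewrite gt_eqF.
exact: h2.
Qed.

Lemma sqnormD_le u v c : 0 < c ->
  sqnorm (u + v) <= (1 + c) * sqnorm u + (1 + c^-1) * sqnorm v.
Proof.
move=> c0; rewrite sqnormD.
have := young u v (c := c^-1); rewrite invr_gt0 invrK => /(_ c0) h.
by rewrite !mulrDl !mul1r; lra.
Qed.
Lemma sqnormB_le u v c : 0 < c ->
  sqnorm (u - v) <= (1 + c) * sqnorm u + (1 + c^-1) * sqnorm v.
Proof. by move=> c0; rewrite -(sqnormN v); apply: sqnormD_le. Qed.

Lemma sqnorm_lipschitz (g : 'rV[R]_p -> 'rV[R]_p) (L : R) :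
  (forall x y, enorm (g x - g y) <= L * enorm (x - y)) ->
  forall x y, sqnorm (g x - g y) <= L ^+ 2 * sqnorm (x - y).
Proof.
move=> hg x y; have h := hg x y.
have h2 := ler_pM (sqrtr_ge0 _) (sqrtr_ge0 _) h h.
by rewrite /enorm mulrACA -!expr2 !sqr_sqrtr ?sqnorm_ge0 // in h2.
Qed.

End InnerProduct.

(* Uniform averages over a finite type: expectation under the uniform law. *)
Section Averages.
Variable R : numFieldType.

Definition avg (T : finType) (F : T -> R) : R := #|T|%:R^-1 * \sum_t F t.

Lemma eq_avg (T : finType) (F G : T -> R) : (forall t, F t = G t) -> avg F = avg G.
Proof. by move=> h; congr avg; apply: funext. Qed.
Lemma avgD (T : finType) (F G : T -> R) :
  avg (fun t => F t + G t) = avg F + avg G.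
Proof. by rewrite /avg big_split mulrDr. Qed.
Lemma avgB (T : finType) (F G : T -> R) :
  avg (fun t => F t - G t) = avg F - avg G.
Proof. by rewrite /avg sumrB mulrBr. Qed.
Lemma avgZ (T : finType) (F : T -> R) c :
  avg (fun t => c * F t) = c * avg F.
Proof. by rewrite /avg -mulr_sumr mulrCA. Qed.
Lemma avg_const (T : finType) c : (0 < #|T|)%N -> avg (fun _ : T => c) = c.
Proof.
move=> T0; rewrite /avg sumr_const (_ : #|xpredT| = #|T|) //.
by rewrite -[c *+ _]mulr_natl mulrA mulVf ?mul1r // pnatr_eq0 -lt0n.
Qed.
Lemma avg_lin (T : finType) (F : T -> R) a b : (0 < #|T|)%N ->
  avg (fun t => a * F t + b) = a * avg F + b.
Proof. by move=> T0; rewrite avgD avgZ avg_const. Qed.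
Lemma avg_le (T : finType) (F G : T -> R) :
  (forall t, F t <= G t) -> avg F <= avg G.
Proof. by move=> h; rewrite /avg ler_wpM2l ?invr_ge0 ?ler0n //; apply: ler_sum. Qed.
Lemma avg_ge0 (T : finType) (F : T -> R) : (forall t, 0 <= F t) -> 0 <= avg F.
Proof. by move=> h; rewrite /avg mulr_ge0 ?invr_ge0 ?ler0n //; apply: sumr_ge0. Qed.
Lemma avg_ord (k : nat) (F : 'I_k -> R) : avg F = k%:R^-1 * \sum_(i < k) F i.
Proof. by rewrite /avg card_ord. Qed.
Lemma avg_sum (T I : finType) (F : I -> T -> R) :
  avg (fun t => \sum_i F i t) = \sum_i avg (F i).
Proof. by rewrite /avg exchange_big /= mulr_sumr. Qed.
Lemma avg_swap (T I : finType) (F : I -> T -> R) :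
  avg (fun t => avg (fun i => F i t)) = avg (fun i => avg (F i)).
Proof.
rewrite /avg -[in LHS]mulr_sumr -[in RHS]mulr_sumr exchange_big /=.
by rewrite !mulrA [_ * #|T|%:R^-1]mulrC.
Qed.

Lemma avg_if (k : nat) (j : 'I_k) (A B : R) : (0 < k)%N ->
  avg (fun j' : 'I_k => if j == j' then A else B) = k%:R^-1 * A + (1 - k%:R^-1) * B.
Proof.
move=> k0.
have -> : (fun j' : 'I_k => if j == j' then A else B) =
   (fun j' => B + (if j == j' then A - B else 0)).
  by apply: funext => j'; case: eqP => _; rewrite ?addr0 // addrC subrK.
rewrite avgD avg_const ?card_ord // /avg card_ord -big_mkcond /=.
rewrite (big_pred1 j); last by move=> j'; rewrite /= eq_sym.
by rewrite mulrBr mulrBl mul1r addrCA addrA.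
Qed.

End Averages.

(* A uniformly random map t : 'I_n -> 'I_m has independent uniform
   coordinates; we only need the one- and two-coordinate marginals. *)
Section UniformMaps.
Variables (R : numFieldType) (n m : nat).
Local Notation FF := {ffun 'I_n -> 'I_m}.

Lemma sum_ffun_coord (i : 'I_n) (h : 'I_m -> R) :
  \sum_(t : FF) h (t i) =
  (\sum_j h j) * \prod_(k | k != i) \sum_(j : 'I_m) (1 : R).
Proof.
pose F k j := if k == i then h j else 1.
have e : forall t : FF, h (t i) = \prod_k F k (t k).
  by move=> t; rewrite (bigD1 i) //= /F eqxx big1 ?mulr1 // => k /negbTE ->.
rewrite (eq_bigr _ (fun t _ => e t)) -bigA_distr_bigA (bigD1 i) //= /F eqxx.
by congr (_ * _); apply: eq_bigr => k /negbTE ->.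
Qed.

Lemma avg_ffun_coord (i : 'I_n) (h : 'I_m -> R) : (0 < m)%N ->
  avg (fun t : FF => h (t i)) = avg h.
Proof.
move=> m0; rewrite /avg sum_ffun_coord.
have := sum_ffun_coord i (fun _ => 1); rewrite !sumr_const !card_ord.
set P := \prod_(k | _) _ => hP.
have c : #|FF|%:R = (m%:R * P : R) by rewrite -hP -[LHS]mulr1n.
rewrite c invfM mulrAC mulrA mulrAC -mulrA mulVf ?mulr1 //.
apply/eqP => P0; move: c; rewrite P0 mulr0 => /eqP; rewrite pnatr_eq0.
by rewrite card_ffun !card_ord expn_eq0 -[m == 0%N]negbK -lt0n m0.
Qed.

Lemma avg_refresh (i : 'I_n) (j : 'I_m) (h : bool -> R) : (0 < m)%N ->
  avg (fun s : FF => h (j == s i)) = m%:R^-1 * h true + (1 - m%:R^-1) * h false.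
Proof.
move=> m0; rewrite (avg_ffun_coord i (fun j' => h (j == j'))) // -(avg_if j) //.
by apply: eq_avg => j'; case: eqP.
Qed.

Lemma sum_ffun_two_coords (i i' : 'I_n) (a b : 'I_m -> R) : i != i' ->
  \sum_j b j = 0 -> \sum_(t : FF) a (t i) * b (t i') = 0.
Proof.
move=> ii' b0.
pose F k j := if k == i then a j else if k == i' then b j else 1.
have e : forall t : FF, a (t i) * b (t i') = \prod_k F k (t k).
  move=> t; rewrite (bigD1 i) //= (bigD1 i') //=; last by rewrite eq_sym.
  rewrite /F eqxx eq_sym (negbTE ii') eqxx big1 ?mulr1 //.
  by move=> k /andP[/negbTE -> /negbTE ->].
rewrite (eq_bigr _ (fun t _ => e t)) -bigA_distr_bigA (bigD1 i') //= /F eqxx.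
by rewrite eq_sym (negbTE ii') b0 mul0r.
Qed.

End UniformMaps.

Section VectorAverages.
Variables (R : realType) (p : nat).

Definition avgv (T : finType) (F : T -> 'rV[R]_p) : 'rV[R]_p := #|T|%:R^-1 *: \sum_t F t.

Lemma avgvD (T : finType) (F G : T -> 'rV[R]_p) :
  avgv (fun t => F t + G t) = avgv F + avgv G.
Proof. by rewrite /avgv big_split scalerDr. Qed.
Lemma avgvB (T : finType) (F G : T -> 'rV[R]_p) :
  avgv (fun t => F t - G t) = avgv F - avgv G.
Proof. by rewrite /avgv sumrB scalerBr. Qed.
Lemma avgvZ (T : finType) (F : T -> 'rV[R]_p) c :
  avgv (fun t => c *: F t) = c *: avgv F.
Proof. by rewrite /avgv -scaler_sumr !scalerA mulrC. Qed.
Lemma avgv_const (T : finType) (v : 'rV[R]_p) : (0 < #|T|)%N -> avgv (fun _ : T => v) = v.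
Proof.
move=> T0; rewrite /avgv sumr_const (_ : #|xpredT| = #|T|) //.
by rewrite -[v *+ _]scaler_nat scalerA mulVf ?scale1r // pnatr_eq0 -lt0n.
Qed.
Lemma avgv_ord (k : nat) (F : 'I_k -> 'rV[R]_p) :
  avgv F = k%:R^-1 *: \sum_(i < k) F i.
Proof. by rewrite /avgv card_ord. Qed.
Lemma avgv_swap (T I : finType) (F : I -> T -> 'rV[R]_p) :
  avgv (fun t => avgv (fun i => F i t)) = avgv (fun i => avgv (F i)).
Proof.
rewrite /avgv -[in LHS]scaler_sumr -[in RHS]scaler_sumr exchange_big /=.
by rewrite !scalerA mulrC.
Qed.
Lemma avg_dotl (T : finType) (F : T -> 'rV[R]_p) v :
  avg (fun t => dotv (F t) v) = dotv (avgv F) v.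
Proof. by rewrite /avg /avgv dotvZl dotv_suml. Qed.

Lemma bias_var (T : finType) (F : T -> 'rV[R]_p) : (0 < #|T|)%N ->
  avg (fun t => sqnorm (F t)) =
  sqnorm (avgv F) + avg (fun t => sqnorm (F t - avgv F)).
Proof.
move=> T0.
have -> : (fun t => sqnorm (F t - avgv F)) =
  (fun t => sqnorm (F t) - 2 * dotv (F t) (avgv F) + sqnorm (avgv F)).
  by apply: funext => t; rewrite sqnormB.
rewrite avgD avgB avgZ avg_dotl avg_const // -sqnormE; ring.
Qed.

Lemma jensen (T : finType) (F : T -> 'rV[R]_p) : (0 < #|T|)%N ->
  sqnorm (avgv F) <= avg (fun t => sqnorm (F t)).
Proof.
by move=> T0; rewrite bias_var // lerDl; apply: avg_ge0 => t; exact: sqnorm_ge0.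
Qed.

Lemma avgv_ffun_coord (n m : nat) (i : 'I_n) (h : 'I_m -> 'rV[R]_p) : (0 < m)%N ->
  avgv (fun t : {ffun 'I_n -> 'I_m} => h (t i)) = avgv h.
Proof.
move=> m0; apply/rowP => l; rewrite /avgv !mxE !summxE.
have := avg_ffun_coord i (fun j => h j 0 l) m0; rewrite /avg => ->.
by rewrite card_ord.
Qed.

Lemma avg_sqnorm_indep (n m : nat) (d : 'I_n -> 'I_m -> 'rV[R]_p) : (0 < m)%N ->
  (forall i, \sum_j d i j = 0) ->
  avg (fun t : {ffun 'I_n -> 'I_m} => sqnorm (\sum_i d i (t i))) =
  \sum_i avg (fun j => sqnorm (d i j)).
Proof.
move=> m0 d0.
have -> : (fun t : {ffun 'I_n -> 'I_m} => sqnorm (\sum_i d i (t i))) = (fun t =>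
    \sum_i \sum_i' dotv (d i (t i)) (d i' (t i'))).
  apply: funext => t; rewrite sqnormE dotv_suml; apply: eq_bigr => i _.
  by rewrite dotv_sumr.
rewrite avg_sum; apply: eq_bigr => i _; rewrite avg_sum (bigD1 i) //= big1 ?addr0.
  rewrite -(avg_ffun_coord i (fun j => sqnorm (d i j)) m0).
  by congr avg; apply: funext => t; rewrite sqnormE.
move=> i' ii'; rewrite /avg /dotv exchange_big /= big1 ?mulr0 // => l _.
apply: (@sum_ffun_two_coords _ _ _ i i' (fun j => d i j 0 l) (fun j => d i' j 0 l)).
  by rewrite eq_sym.
by have := congr1 (fun M : 'rV[R]_p => M 0 l) (d0 i'); rewrite summxE mxE.
Qed.

End VectorAverages.

(* The descent lemma |grad F(x)|^2 <= 4 L (F(x) - inf F), via the mean value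
   theorem along the segment from x to x - grad F(x) / (2L). *)
Section Descent.
Variables (R : realType) (n m p : nat).
Variables (f : 'I_n -> 'I_m -> 'rV[R]_p -> R)
  (gf : 'I_n -> 'I_m -> 'rV[R]_p -> 'rV[R]_p) (L : R).
Hypotheses (n_gt0 : (0 < n)%N) (m_gt0 : (0 < m)%N) (L_gt0 : 0 < L).
Hypothesis f_grad : forall i j x, differentiable (f i j) x /\
  forall v, 'd (f i j) x v = dotv (gf i j x) v.
Hypothesis gf_lip : forall i j x y,
  sqnorm (gf i j x - gf i j y) <= L ^+ 2 * sqnorm (x - y).

Definition gradF (x : 'rV[R]_p) : 'rV[R]_p :=
  n%:R^-1 *: \sum_(i < n) (m%:R^-1 *: \sum_(j < m) gf i j x).

Lemma is_derive_line (F : 'rV[R]_p -> R) (x d : 'rV[R]_p) (t D : R) :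
  differentiable F (x + t *: d) -> 'd F (x + t *: d) d = D ->
  is_derive t 1 (fun s => F (x + s *: d)) D.
Proof.
move=> dF eD.
have ef : (fun h : R => h^-1 *: (((fun s => F (x + s *: d)) \o shift t) (h *: 1)
            - F (x + t *: d))) =
          (fun h : R => h^-1 *: ((F \o shift (x + t *: d)) (h *: d) - F (x + t *: d))).
  apply: funext => h /=; congr (_ *: (F _ - _)).
  by rewrite [h *: 1]mulr1 scalerDl addrCA addrA.
have dv : derivable F (x + t *: d) d by exact: diff_derivable.
apply: DeriveDef; first by rewrite /derivable ef.
by rewrite /derive ef -/(derive F _ d) deriveE.
Qed.

Lemma Fobj_is_derive (x d : 'rV[R]_p) (t : R) :
  is_derive t 1 (fun s => Fobj f (x + s *: d)) (dotv (gradF (x + t *: d)) d).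
Proof.
have -> : (fun s => Fobj f (x + s *: d)) =
  n%:R^-1 *: \sum_(i < n) (m%:R^-1 *: \sum_(j < m) (fun s => f i j (x + s *: d))).
  apply: funext => s; rewrite /Fobj scalrfctE fct_sumE /=; congr (_ * _).
  by apply: eq_bigr => i _; rewrite scalrfctE fct_sumE.
have -> : dotv (gradF (x + t *: d)) d =
  n%:R^-1 *: \sum_(i < n) (m%:R^-1 *: \sum_(j < m) dotv (gf i j (x + t *: d)) d).
  rewrite /gradF dotvZl dotv_suml; congr (_ * _); apply: eq_bigr => i _.
  by rewrite dotvZl dotv_suml.
apply: is_deriveZ; apply: is_derive_sum => i.
apply: is_deriveZ; apply: is_derive_sum => j.
have [D1 D2] := f_grad i j (x + t *: d).
exact: is_derive_line.
Qed.

Lemma gradF_lip (x y : 'rV[R]_p) :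
  sqnorm (gradF y - gradF x) <= L ^+ 2 * sqnorm (y - x).
Proof.
have -> : gradF y - gradF x =
  avgv (fun i : 'I_n => avgv (fun j : 'I_m => gf i j y - gf i j x)).
  rewrite /gradF -!avgv_ord -avgvB; congr avgv; apply: funext => i.
  by rewrite avgvB !avgv_ord.
apply: le_trans; first by apply: jensen; rewrite card_ord.
have -> : L ^+ 2 * sqnorm (y - x) =
  avg (fun i : 'I_n => avg (fun j : 'I_m => L ^+ 2 * sqnorm (y - x))).
  by rewrite !avg_const ?card_ord.
apply: avg_le => i; apply: le_trans; first by apply: jensen; rewrite card_ord.
by apply: avg_le => j; apply: gf_lip.
Qed.

Lemma descent_step (x : 'rV[R]_p) :
  Fobj f (x + - (2 * L)^-1 *: gradF x) - Fobj f x <= - (4 * L)^-1 * sqnorm (gradF x).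
Proof.
set g := gradF x; set d := - (2 * L)^-1 *: g.
have hder := Fobj_is_derive x d.
have [c c01 hc] := MVT (@ltr01 R) (fun t _ => hder t)
  (derivable_within_continuous (fun t _ => @ex_derive _ _ _ _ _ _ _ (hder t))).
move: hc; rewrite scale0r addr0 scale1r subr0 mulr1.
set y := x + c *: d => hc.
have c1 : c < 1 by move: c01; rewrite in_itv /= => /andP[].
have e1 : dotv (gradF y) d = dotv g d + dotv (gradF y - g) d.
  by rewrite dotvBl addrC subrK.
have e2 : dotv g d = - (2 * L)^-1 * sqnorm g by rewrite /d dotvZr sqnormE.
have sd : sqnorm d = (2 * L)^-2 * sqnorm g by rewrite /d sqnormZ sqrrN exprVn.
(* along the segment the gradient moves by at most L |d| since c < 1 *)
have hl : sqnorm (gradF y - g) <= L ^+ 2 * sqnorm d.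
  apply: le_trans; first exact: gradF_lip.
  rewrite /y addrC addKr sqnormZ ler_wpM2l ?sqr_ge0 //.
  rewrite -[X in _ <= X]mul1r ler_wpM2r ?sqnorm_ge0 //.
  have c0 : 0 < c by move: c01; rewrite in_itv /= => /andP[].
  by rewrite expr2; nra.
have hy : 2 * dotv (gradF y - g) d <= L^-1 * sqnorm (gradF y - g) + L * sqnorm d.
  exact: young.
have hl2 : L^-1 * sqnorm (gradF y - g) <= L * sqnorm d.
  rewrite -(ler_pM2l L_gt0) mulrA mulfV ?gt_eqF // mul1r.
  by apply: le_trans hl _; rewrite expr2 -mulrA.
have SG := sqnorm_ge0 g.
set S := sqnorm g in e2 sd SG *.
rewrite hc e1 e2.
have : dotv (gradF y - g) d <= L * sqnorm d by lra.
rewrite sd => h2.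
have -> : - (4 * L)^-1 * S = - (2 * L)^-1 * S + L * ((2 * L) ^- 2 * S).
  by field; rewrite gt_eqF.
lra.
Qed.

Lemma grad_sqnorm_le (x : 'rV[R]_p) (Fs : R) : (forall y, Fs <= Fobj f y) ->
  sqnorm (gradF x) <= 4 * L * (Fobj f x - Fs).
Proof.
move=> Fs_le; have := descent_step x; have := Fs_le (x + - (2 * L)^-1 *: gradF x).
set S := sqnorm (gradF x) => h1 h2.
have : S / (4 * L) <= Fobj f x - Fs.
  have -> : S / (4 * L) = - (- (4 * L)^-1 * S) by rewrite mulNr opprK mulrC.
  lra.
by rewrite ler_pdivrMr ?mulr_gt0 // => h; rewrite mulrC.
Qed.

End Descent.

(* The elementary arithmetic closing the estimate, with M = m, N = n,
   a = alpha^2, C the consensus error, T the table error, D = F(xbar) - inf F,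
   G = |mu|^2 and V the variance of the gradient estimate. *)
Section ClosingArithmetic.
Variable R : realFieldType.

(* the variance contribution, using the step-size condition 8 m L^2 a <= n *)
Lemma variance_term_arith (M N L a C T V : R) :
  1 <= M -> 1 <= N -> 0 <= a -> 8 * M * L ^+ 2 * a <= N -> 0 <= C -> 0 <= T ->
  V <= N^-1 * L ^+ 2 * (2 * C + 2 * T) ->
  a * V <= 2 * a * L ^+ 2 * C + (4 * M)^-1 * T.
Proof.
move=> M1 N1 a0 hA C0 T0 hV.
have N0 : 0 < N by lra.
set q := a * L ^+ 2 * N^-1.
have Ni1 : N^-1 <= 1 by rewrite invr_le1 ?unitf_gt0.
have qa : q <= a * L ^+ 2.
  by rewrite /q -[leRHS]mulr1 ler_wpM2l // mulr_ge0 // sqr_ge0.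
have qM : 2 * q <= (4 * M)^-1.
  rewrite -[(4 * M)^-1]mul1r ler_pdivlMr; last lra.
  have -> : 2 * q * (4 * M) = (8 * M * L ^+ 2 * a) / N by rewrite /q; ring.
  by rewrite ler_pdivrMr // mul1r.
have aV : a * V <= q * (2 * C + 2 * T).
  by apply: le_trans (ler_wpM2l a0 hV) _; rewrite /q; lra.
have : q * C <= a * L ^+ 2 * C by rewrite ler_wpM2r.
have : 2 * q * T <= (4 * M)^-1 * T by rewrite ler_wpM2r.
lra.
Qed.

Lemma recursion_arith (M N L a C T D G V E : R) :
  1 <= M -> 1 <= N -> 0 < L -> 0 <= a -> 8 * M * L ^+ 2 * a <= N ->
  0 <= C -> 0 <= T -> 0 <= D -> 0 <= G ->
  E <= M^-1 * (9/4 * C + 9/5 * a * G + a * V)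
       + (1 - M^-1) * ((1 + (2 * M)^-1) * T + (1 + 2 * M) * a * G + a * V) ->
  V <= N^-1 * L ^+ 2 * (2 * C + 2 * T) ->
  G <= 2 * L ^+ 2 * C + 8 * L * D ->
  E <= (1 - (4 * M)^-1) * T + 16 * M * a * L * D
       + (8 * M * a * L ^+ 2 + 9 / (4 * M)) * C.
Proof.
move=> M1 N1 L0 a0 hA C0 T0 D0 G0 hE hV hG.
have aV := variance_term_arith M1 N1 a0 hA C0 T0 hV.
have M0 : 0 < M by lra.
set r := M^-1 in hE aV *.
have r0 : 0 < r by rewrite invr_gt0.
have Mr : M * r = 1 by rewrite mulfV ?gt_eqF.
have r1 : r <= 1 by rewrite invr_le1 ?unitf_gt0.
have e2M : (2 * M)^-1 = r / 2 by rewrite invfM mulrC.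
have e4M : (4 * M)^-1 = r / 4 by rewrite invfM mulrC.
have e94 : 9 / (4 * M) = 9 / 4 * r by rewrite invfM mulrA.
rewrite e94 e4M; rewrite e2M in hE; rewrite e4M in aV.
have aG0 : 0 <= a * G by rewrite mulr_ge0.
have cG : a * G * (9/5 * r + (1 - r) * (1 + 2 * M)) <= 2 * M * (a * G) by nra.
have aG : 2 * M * (a * G) <= 2 * M * a * (2 * L ^+ 2 * C + 8 * L * D).
  have Ma0 : 0 <= 2 * M * a by nra.
  by rewrite mulrA; apply: ler_wpM2l.
have cT : (1 - r) * (1 + r / 2) * T + r / 4 * T <= (1 - r / 4) * T.
  rewrite -mulrDl ler_wpM2r //; nra.
have cC : 2 * a * L ^+ 2 * C <= 2 * M * a * L ^+ 2 * C.
  have : 0 <= a * L ^+ 2 * C by rewrite mulr_ge0 // mulr_ge0 // sqr_ge0.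
  nra.
have : 0 <= M * a * L ^+ 2 * C.
  by rewrite mulr_ge0 // mulr_ge0 ?sqr_ge0 // mulr_ge0 // ltW.
have eE : r * (9 / 4 * C + 9 / 5 * a * G + a * V) +
    (1 - r) * ((1 + r / 2) * T + (1 + 2 * M) * a * G + a * V) =
    r * (9/4) * C + (1 - r) * (1 + r / 2) * T
    + a * G * (9/5 * r + (1 - r) * (1 + 2 * M)) + a * V by ring.
rewrite eE in hE.
lra.
Qed.

End ClosingArithmetic.

Lemma stepsize_sq (R : rcfType) (N M L a : R) : 0 <= N -> 0 < M -> 0 < L -> 0 < a ->
  a <= Num.sqrt N / (Num.sqrt (8 * M) * L) -> 8 * M * L ^+ 2 * a ^+ 2 <= N.
Proof.
move=> N0 M0 L0 a0 ale.
have M8 : 0 <= 8 * M by rewrite mulr_ge0 // ltW.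
have s8 : 0 < Num.sqrt (8 * M) by rewrite sqrtr_gt0 mulr_gt0.
have h1 : a * (Num.sqrt (8 * M) * L) <= Num.sqrt N.
  by rewrite -ler_pdivlMr ?mulr_gt0.
have h0 : 0 <= a * (Num.sqrt (8 * M) * L) by rewrite !mulr_ge0 // ltW.
have h2 := ler_pM h0 h0 h1 h1.
rewrite -!expr2 !exprMn !sqr_sqrtr // in h2.
by rewrite mulrC in h2.
Qed.

Lemma young_average (R : realType) (n m p : nat) (u : 'I_n -> 'rV[R]_p)
    (v : 'I_n -> 'I_m -> 'rV[R]_p) (w : 'rV[R]_p) (a V : R) :
  (0 < n)%N -> (0 < m)%N ->
  avg (fun i => m%:R^-1 * (sqnorm (u i - a *: w) + a ^+ 2 * V)
      + (1 - m%:R^-1) * avg (fun j => sqnorm (v i j - a *: w) + a ^+ 2 * V)) <=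
  m%:R^-1 * (9/4 * avg (fun i => sqnorm (u i)) + 9/5 * a ^+ 2 * sqnorm w + a ^+ 2 * V)
  + (1 - m%:R^-1) * ((1 + (2 * m%:R)^-1) * avg (fun i => avg (fun j => sqnorm (v i j)))
      + (1 + 2 * m%:R) * a ^+ 2 * sqnorm w + a ^+ 2 * V).
Proof.
move=> n0 m0.
have mi0 : 0 <= (m%:R : R)^-1 by rewrite invr_ge0 ler0n.
have mi1 : 0 <= 1 - (m%:R : R)^-1 by rewrite subr_ge0 invr_le1 ?unitf_gt0 ?ler1n // ltr0n.
set G := sqnorm w; set K1 := 9/5 * a ^+ 2 * G + a ^+ 2 * V.
set c := 1 + (2 * m%:R)^-1; set K2 := (1 + 2 * m%:R) * a ^+ 2 * G + a ^+ 2 * V.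
apply: (@le_trans _ _ (avg (fun i => m%:R^-1 * (9/4 * sqnorm (u i) + K1)
    + (1 - m%:R^-1) * avg (fun j => c * sqnorm (v i j) + K2)))).
  apply: avg_le => i; apply: lerD.
    rewrite ler_wpM2l // /K1 addrA lerD2r.
    have := sqnormB_le (u i) (a *: w) (c := 5/4) ltac:(lra).
    by rewrite sqnormZ -/G (_ : 1 + 5/4 = 9/4 :> R) 1?(_ : 1 + (5/4)^-1 = 9/5 :> R)
      ?mulrA //; field.
  rewrite ler_wpM2l //; apply: avg_le => j; rewrite /K2 addrA lerD2r.
  have := sqnormB_le (v i j) (a *: w) (c := (2 * m%:R)^-1) _.
  rewrite invrK sqnormZ mulrA; apply.
  by rewrite invr_gt0 mulr_gt0 // ltr0n.
have ei : forall i, avg (fun j => c * sqnorm (v i j) + K2) =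
    c * avg (fun j => sqnorm (v i j)) + K2.
  by move=> i; rewrite avg_lin ?card_ord.
under eq_avg => i do rewrite ei.
rewrite avgD (avgZ (fun i => 9/4 * sqnorm (u i) + K1)).
rewrite (avgZ (fun i => c * avg (fun j => sqnorm (v i j)) + K2)).
rewrite (avg_lin (fun i => sqnorm (u i))) ?card_ord //.
rewrite (avg_lin (fun i => avg (fun j => sqnorm (v i j)))) ?card_ord //.
by rewrite /K1 /K2 !addrA.
Qed.

Section OneStep.
Variables (R : realType) (n m p : nat).
Variables (gf : 'I_n -> 'I_m -> 'rV[R]_p -> 'rV[R]_p) (W : 'M[R]_n) (alpha : R).
Local Notation FF := {ffun 'I_n -> 'I_m}.
Hypotheses (n_gt0 : (0 < n)%N) (m_gt0 : (0 < m)%N).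
Hypothesis col_stoch : forall r, \sum_i W i r = 1.

Definition saga_est (st : state R n m p) (i : 'I_n) (j : 'I_m) : 'rV[R]_p :=
  gf i j (sx st i) - gf i j (sz st i j) + m%:R^-1 *: \sum_(j' < m) gf i j' (sz st i j').

Definition gbar (st : state R n m p) (tau : FF) : 'rV[R]_p :=
  n%:R^-1 *: \sum_i saga_est st i (tau i).

Definition mean_est (st : state R n m p) : 'rV[R]_p :=
  avgv (fun i : 'I_n => avgv (fun j : 'I_m => gf i j (sx st i))).
Definition var_est (st : state R n m p) : R :=
  avg (fun tau : FF => sqnorm (gbar st tau - mean_est st)).

Definition cons_avg (st : state R n m p) : R :=
  avg (fun i : 'I_n => sqnorm (xbar st - sx st i)).
Definition table_avg (st : state R n m p) : R :=
  avg (fun i : 'I_n => avg (fun j : 'I_m => sqnorm (xbar st - sz st i j))).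

Lemma consensus_errE st : n%:R^-1 * consensus_err st = cons_avg st.
Proof.
by rewrite /cons_avg avg_ord; congr (_ * _); apply: eq_bigr => i _; rewrite sqnormBC.
Qed.

Lemma tkE st : tk st = table_avg st.
Proof. by rewrite /table_avg avg_ord; congr (_ * _); apply: eq_bigr => i _; rewrite avg_ord. Qed.

Lemma mix_colsum (V : 'I_n -> 'rV[R]_p) : \sum_i \sum_r W i r *: V r = \sum_r V r.
Proof.
rewrite exchange_big /=; apply: eq_bigr => r _.
by rewrite -scaler_suml col_stoch scale1r.
Qed.

Lemma tracking_invariant x0 omega k :
  \sum_i sy (gt_saga gf W alpha x0 omega k) i =
  \sum_i sg (gt_saga gf W alpha x0 omega k) i.
Proof.
elim: k => [|k IH] /=; first by rewrite !big1.
rewrite (mix_colsum (fun r => _ + _ - _)) sumrB big_split /= IH.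
by rewrite addrAC subrr add0r.
Qed.

Lemma xbar_step st d : \sum_i sy st i = \sum_i sg st i ->
  xbar (step gf W alpha st d) = xbar st - alpha *: gbar st d.1.
Proof.
move=> inv; rewrite /xbar /= (mix_colsum (fun r => _ - _)) sumrB.
rewrite -scaler_sumr (mix_colsum (fun r => _ + _ - _)) sumrB big_split /= inv.
by rewrite addrAC subrr add0r scalerBr !scalerA mulrC.
Qed.

Lemma gt_saga_prefix x0 omega k d k' : (k' <= k)%N ->
  gt_saga gf W alpha x0 (fun t => if t == k then d else omega t) k' =
  gt_saga gf W alpha x0 omega k'.
Proof.
elim: k' => [//|k' IH] hk /=.
by rewrite IH ?(ltnW hk) // (_ : (k' == k) = false) // ltn_eqF.
Qed.

Lemma cond_exp_next_step (Y : state R n m p -> R) x0 omega k :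
  cond_exp_next k (fun w => Y (gt_saga gf W alpha x0 w k.+1)) omega =
  avg (fun tau : FF => avg (fun s : FF =>
    Y (step gf W alpha (gt_saga gf W alpha x0 omega k) (tau, s)))).
Proof.
set st := gt_saga gf W alpha x0 omega k; rewrite /cond_exp_next /=.
have -> : \sum_(d : draw n m) Y (step gf W alpha
     (gt_saga gf W alpha x0 (fun t => if t == k then d else omega t) k)
     (if k == k then d else omega k)) =
   \sum_(d : draw n m) Y (step gf W alpha st d).
  by apply: eq_bigr => d _; rewrite gt_saga_prefix // eqxx.
have -> : \sum_(d : draw n m) Y (step gf W alpha st d) =
   \sum_(tau : FF) \sum_(s : FF) Y (step gf W alpha st (tau, s)).
  by rewrite pair_bigA; apply: eq_bigr => -[tau s] _.
rewrite /avg card_prod natrM invfM -mulrA; congr (_ * _).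
by rewrite mulr_sumr.
Qed.

Lemma tk_refresh st : \sum_i sy st i = \sum_i sg st i -> forall tau,
  avg (fun s : FF => tk (step gf W alpha st (tau, s))) =
  avg (fun i : 'I_n => m%:R^-1 * sqnorm (xbar st - sx st i - alpha *: gbar st tau)
     + (1 - m%:R^-1) * avg (fun j : 'I_m =>
          sqnorm (xbar st - sz st i j - alpha *: gbar st tau))).
Proof.
move=> inv tau; set P := xbar st - alpha *: gbar st tau.
have et : forall s : FF, tk (step gf W alpha st (tau, s)) =
    avg (fun i : 'I_n => avg (fun j : 'I_m =>
      sqnorm (P - (if j == s i then sx st i else sz st i j)))).
  by move=> s; rewrite tkE /table_avg xbar_step.
rewrite (eq_avg et) avg_swap; apply: eq_avg => i; rewrite avg_swap.
have ej : forall j : 'I_m,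
    avg (fun s : FF => sqnorm (P - (if j == s i then sx st i else sz st i j))) =
    m%:R^-1 * sqnorm (P - sx st i) + (1 - m%:R^-1) * sqnorm (P - sz st i j).
  move=> j.
  exact: (avg_refresh i j (fun b => sqnorm (P - (if b then sx st i else sz st i j)))).
rewrite (eq_avg ej) avgD avg_const ?card_ord // avgZ /P.
congr (_ * _ + _ * _); first by rewrite addrAC.
by apply: eq_avg => j; rewrite addrAC.
Qed.

Lemma card_FF : (0 < #|FF|)%N.
Proof. by rewrite card_ffun !card_ord expn_gt0 m_gt0. Qed.

Lemma avgv_saga_est st i : avgv (saga_est st i) = avgv (fun j => gf i j (sx st i)).
Proof. by rewrite /saga_est avgvD avgvB avgv_const ?card_ord // -avgv_ord subrK. Qed.

Lemma avgv_gbar st : avgv (gbar st) = mean_est st.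
Proof.
have -> : gbar st = fun tau => avgv (fun i => saga_est st i (tau i)).
  by apply: funext => tau; rewrite /gbar avgv_ord.
rewrite avgv_swap /mean_est; congr avgv; apply: funext => i.
by rewrite avgv_ffun_coord // avgv_saga_est.
Qed.

Lemma avg_sqnorm_step st u : avg (fun tau : FF => sqnorm (u - alpha *: gbar st tau)) =
  sqnorm (u - alpha *: mean_est st) + alpha ^+ 2 * var_est st.
Proof.
rewrite bias_var ?card_FF //.
have -> : avgv (fun tau => u - alpha *: gbar st tau) = u - alpha *: mean_est st.
  by rewrite avgvB avgv_const ?card_FF // avgvZ avgv_gbar.
congr (_ + _); rewrite /var_est -avgZ; congr avg; apply: funext => tau.
have e : forall x y z : 'rV[R]_p, x - y - (x - z) = - (y - z).
  by move=> x y z; rewrite !opprB [LHS]addrC addrA subrK.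
by rewrite e sqnormN -scalerBr sqnormZ.
Qed.

Lemma avg_tau_step st (u : 'I_n -> 'rV[R]_p) (v : 'I_n -> 'I_m -> 'rV[R]_p) :
  avg (fun tau : FF => avg (fun i : 'I_n =>
     m%:R^-1 * sqnorm (u i - alpha *: gbar st tau)
     + (1 - m%:R^-1) * avg (fun j : 'I_m => sqnorm (v i j - alpha *: gbar st tau)))) =
  avg (fun i : 'I_n =>
     m%:R^-1 * (sqnorm (u i - alpha *: mean_est st) + alpha ^+ 2 * var_est st)
     + (1 - m%:R^-1) * avg (fun j : 'I_m =>
          sqnorm (v i j - alpha *: mean_est st) + alpha ^+ 2 * var_est st)).
Proof.
rewrite (avg_swap (fun (i : 'I_n) (tau : FF) =>
    m%:R^-1 * sqnorm (u i - alpha *: gbar st tau)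
  + (1 - m%:R^-1) * avg (fun j : 'I_m => sqnorm (v i j - alpha *: gbar st tau)))).
apply: eq_avg => i; rewrite avgD.
rewrite (avgZ (fun tau : FF => sqnorm (u i - alpha *: gbar st tau))).
rewrite (avgZ (fun tau : FF => avg (fun j : 'I_m => sqnorm (v i j - alpha *: gbar st tau)))).
rewrite avg_sqnorm_step.
rewrite (avg_swap (fun (j : 'I_m) (tau : FF) => sqnorm (v i j - alpha *: gbar st tau))).
by congr (_ + _ * _); apply: eq_avg => j; exact: avg_sqnorm_step.
Qed.

Lemma avg_step_table_error st : \sum_i sy st i = \sum_i sg st i ->
  avg (fun tau : FF => avg (fun s : FF => tk (step gf W alpha st (tau, s)))) =
  avg (fun i : 'I_n =>
     m%:R^-1 * (sqnorm (xbar st - sx st i - alpha *: mean_est st) + alpha ^+ 2 * var_est st)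
     + (1 - m%:R^-1) * avg (fun j : 'I_m =>
          sqnorm (xbar st - sz st i j - alpha *: mean_est st) + alpha ^+ 2 * var_est st)).
Proof. by move=> inv; rewrite (eq_avg (tk_refresh inv)) avg_tau_step. Qed.

Variables (f : 'I_n -> 'I_m -> 'rV[R]_p -> R) (L : R).
Hypothesis gf_lip : forall i j x y,
  sqnorm (gf i j x - gf i j y) <= L ^+ 2 * sqnorm (x - y).

(* the n estimators are independent and centred, and each has variance at
   most L^2 times the spread of the table around x_i *)
Lemma variance_le st : var_est st <= n%:R^-1 * (L ^+ 2 *
    avg (fun i : 'I_n => avg (fun j : 'I_m => sqnorm (sx st i - sz st i j)))).
Proof.
pose D i j := gf i j (sx st i) - gf i j (sz st i j).
pose dd i j := D i j - avgv (D i).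
have ehh : forall i j, saga_est st i j - avgv (fun j => gf i j (sx st i)) = dd i j.
  by move=> i j; rewrite /dd /saga_est /D avgvB -avgv_ord opprB addrA.
have e : forall tau, gbar st tau - mean_est st = n%:R^-1 *: \sum_i dd i (tau i).
  move=> tau; rewrite /gbar -avgv_ord /mean_est -avgvB avgv_ord; congr (_ *: _).
  by apply: eq_bigr => i _; rewrite ehh.
have sum0 : forall i, \sum_j dd i j = 0.
  move=> i; rewrite /dd sumrB sumr_const card_ord /avgv card_ord.
  by rewrite -scaler_nat scalerA mulfV ?scale1r ?subrr // pnatr_eq0 -lt0n.
have -> : var_est st = n%:R^-1 ^+ 2 * \sum_i avg (fun j => sqnorm (dd i j)).
  rewrite /var_est -avg_sqnorm_indep // -avgZ; congr avg; apply: funext => tau.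
  by rewrite e sqnormZ.
have hi : forall i, avg (fun j => sqnorm (dd i j)) <=
    L ^+ 2 * avg (fun j : 'I_m => sqnorm (sx st i - sz st i j)).
  move=> i; apply: (@le_trans _ _ (avg (fun j => sqnorm (D i j)))).
    by rewrite (bias_var (D i)) ?card_ord // lerDr sqnorm_ge0.
  by rewrite -avgZ; apply: avg_le => j; exact: gf_lip.
apply: (@le_trans _ _ (n%:R^-1 ^+ 2 * \sum_i (L ^+ 2 *
          avg (fun j : 'I_m => sqnorm (sx st i - sz st i j))))).
  rewrite ler_wpM2l ?exprn_ge0 ?invr_ge0 ?ler0n //.
  by apply: ler_sum => i _; apply: hi.
by rewrite -avgZ avg_ord mulrA expr2.
Qed.

Lemma spread_bound st :
  avg (fun i : 'I_n => avg (fun j : 'I_m => sqnorm (sx st i - sz st i j)))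
  <= 2 * cons_avg st + 2 * table_avg st.
Proof.
rewrite /cons_avg /table_avg -!avgZ -avgD; apply: avg_le => i /=.
have -> : 2 * sqnorm (xbar st - sx st i) + 2 * avg (fun j => sqnorm (xbar st - sz st i j)) =
    avg (fun j : 'I_m => 2 * sqnorm (xbar st - sx st i) + 2 * sqnorm (xbar st - sz st i j)).
  by rewrite avgD avg_const ?card_ord // avgZ.
apply: avg_le => j.
have -> : sx st i - sz st i j = (xbar st - sz st i j) - (xbar st - sx st i).
  by rewrite opprB [RHS]addrC addrA subrK.
have := sqnormB_le (xbar st - sz st i j) (xbar st - sx st i) (@ltr01 R).
by rewrite invr1; lra.
Qed.

Lemma variance_bound st :
  var_est st <= n%:R^-1 * L ^+ 2 * (2 * cons_avg st + 2 * table_avg st).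
Proof.
apply: le_trans (variance_le st) _.
by rewrite -mulrA ler_wpM2l ?invr_ge0 ?ler0n // ler_wpM2l ?sqr_ge0 // spread_bound.
Qed.

Hypothesis L_gt0 : 0 < L.
Hypothesis f_grad : forall i j x, differentiable (f i j) x /\
  forall v, 'd (f i j) x v = dotv (gf i j x) v.

(* the mean estimate is close to grad F(xbar), which is controlled by descent *)
Lemma mean_grad_bound st Fs : (forall y, Fs <= Fobj f y) ->
  sqnorm (mean_est st) <= 2 * L ^+ 2 * cons_avg st + 8 * L * (Fobj f (xbar st) - Fs).
Proof.
move=> Fs_le; set g := gradF gf (xbar st).
have hmg : sqnorm (mean_est st - g) <= L ^+ 2 * cons_avg st.
  have -> : mean_est st - g = avgv (fun i : 'I_n =>
      avgv (fun j : 'I_m => gf i j (sx st i) - gf i j (xbar st))).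
    rewrite /mean_est /g /gradF -avgv_ord -avgvB; congr avgv; apply: funext => i.
    by rewrite avgvB !avgv_ord.
  apply: le_trans; first by apply: jensen; rewrite card_ord.
  rewrite /cons_avg -avgZ; apply: avg_le => i.
  apply: le_trans; first by apply: jensen; rewrite card_ord.
  rewrite -[X in _ <= X](@avg_const R 'I_m) ?card_ord //; apply: avg_le => j.
  by apply: le_trans (gf_lip _ _ _ _) _; rewrite sqnormBC.
have hgd : sqnorm g <= 4 * L * (Fobj f (xbar st) - Fs).
  exact: grad_sqnorm_le.
have := sqnormD_le (mean_est st - g) g (@ltr01 R); rewrite subrK invr1 => h.
lra.
Qed.

End OneStep.

Local Open Scope classical_set_scope.

Theorem lemma19 (R : realType) (n m p : nat)
  (f : 'I_n -> 'I_m -> 'rV[R]_p -> R)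
  (gf : 'I_n -> 'I_m -> 'rV[R]_p -> 'rV[R]_p)
  (L : R) (W : 'M[R]_n) (alpha : R) (x0 : 'rV[R]_p) :
  (0 < n)%N -> (0 < m)%N -> (0 < p)%N ->
  (forall i j x, differentiable (f i j) x /\
     forall v, 'd (f i j) x v = dotv (gf i j x) v) ->
  0 < L ->
  (forall i j x y, enorm (gf i j x - gf i j y) <= L * enorm (x - y)) ->
  (exists M : R, forall x, M <= Fobj f x) ->
  nonneg_mx W -> primitive_mx W -> doubly_stochastic W ->
  0 < alpha ->
  alpha <= Num.sqrt n%:R / (Num.sqrt (8 * m%:R) * L) ->
  let Fstar := inf [set Fobj f x | x in setT] in
  forall (k : nat) (omega : nat -> draw n m),
    let st := gt_saga gf W alpha x0 omega k in
    cond_exp_next k (fun w => tk (gt_saga gf W alpha x0 w k.+1)) omega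
    <= (1 - (4 * m%:R)^-1) * tk st
       + 16 * m%:R * alpha ^+ 2 * L * (Fobj f (xbar st) - Fstar)
       + (8 * m%:R * alpha ^+ 2 * L ^+ 2 + 9 / (4 * m%:R))
         * (n%:R^-1 * consensus_err st).
Proof.
move=> n_gt0 m_gt0 _ f_grad L_gt0 gf_lip_norm [M HM] _ _ [_ col_stoch] alpha_gt0
  alpha_le Fstar k omega; cbv zeta; set st := gt_saga gf W alpha x0 omega k.
have gf_lip := fun i j => sqnorm_lipschitz (gf_lip_norm i j).
have Fstar_le : forall y, Fstar <= Fobj f y.
  by move=> y; apply: ge_inf; [exists M => _ [x _ <-] | exists y].
have inv : \sum_i sy st i = \sum_i sg st i by exact: tracking_invariant.
rewrite cond_exp_next_step -/st avg_step_table_error // consensus_errE tkE.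
have hE := young_average (fun i => xbar st - sx st i) (fun i j => xbar st - sz st i j)
  (mean_est gf st) alpha (var_est gf st) n_gt0 m_gt0.
have hV := variance_bound m_gt0 gf_lip st.
have hG := mean_grad_bound n_gt0 m_gt0 gf_lip L_gt0 f_grad st Fstar_le.
have hA : 8 * m%:R * L ^+ 2 * alpha ^+ 2 <= n%:R.
  by apply: stepsize_sq; rewrite ?ler0n ?ltr0n.
have C0 : 0 <= cons_avg st by apply: avg_ge0 => i; exact: sqnorm_ge0.
have T0 : 0 <= table_avg st.
  by apply: avg_ge0 => i; apply: avg_ge0 => j; exact: sqnorm_ge0.
have D0 : 0 <= Fobj f (xbar st) - Fstar by rewrite subr_ge0.
have M1 : 1 <= m%:R :> R by rewrite ler1n.
have N1 : 1 <= n%:R :> R by rewrite ler1n.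
exact: recursion_arith M1 N1 L_gt0 (sqr_ge0 alpha) hA C0 T0 D0 (sqnorm_ge0 _) hE hV hG.
Qed.
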